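(* Let $f$ be an injective coloring of a graph $G$. If a walk $W=\langle w_1,\dots,w_{|W|}\rangle$ in $G$ corresponds to a swapping sequence from $f$ to $f$ itself, then $|V(W)|\le (|W|+1)/2$, where $V(W)$ is the set of distinct vertices appearing in $W$ and $|W|$ is the number of entries of the walk.
   Context: A walk $\langle w_1,\dots,w_p\rangle$ corresponds to a swapping sequence $\langle f_1,\dots,f_p\rangle$ from $f=f_1$ to $f_p$ if for $2\le i\le p$, $f_i$ is obtained from $f_{i-1}$ by swapping the colors of $w_{i-1}$ and $w_i$, i.e. $f_i(w_i)=f_{i-1}(w_{i-1})$, $f_i(w_{i-1})=f_{i-1}(w_i)$, and $f_i(v)=f_{i-1}(v)$ for other $v$. *)

From mathcomp Require Import all_boot.
Set Implicit Arguments. Unset Strict Implicit. Unset Printing Implicit Defensive.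

(* A (finite simple) graph on the finType T is a symmetric irreflexive
   relation e : rel T.  A coloring is any map f : T -> C. *)

Definition is_walk (T : finType) (e : rel T) (w : seq T) : bool := sorted e w.

Definition swap_colors (T : finType) (C : Type) (g : T -> C) (u v : T) : T -> C :=
  fun x => if x == u then g v else if x == v then g u else g x.

(* One step of the swapping sequence: from (f_{i-1}, w_{i-1}) and w_i
   produce (f_i, w_i). *)
Definition swap_step (T : finType) (C : Type) (st : (T -> C) * T) (y : T)
  : (T -> C) * T := (swap_colors st.1 st.2 y, y).

Definition swap_seq_end (T : finType) (C : Type) (f : T -> C) (w : seq T)
  : T -> C :=
  match w with
  | [::] => f
  | x :: s => (foldl (@swap_step T C) (f, x) s).1
  end.

From mathcomp Require Import all_boot.
From mathcomp Require Import fingroup perm zify.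

Set Implicit Arguments.
Unset Strict Implicit.
Unset Printing Implicit Defensive.

(* Starting from f, the coloring reached along a walk is f o pi, where pi is
   the product of the transpositions of consecutive walk entries.  Each
   transposition changes the number of cycles of pi by exactly one, and the
   first visit of a vertex y merges the cycle of the current vertex with the
   fixed point y, losing a cycle.  If the walk returns to f, injectivity forces
   pi = 1, so the losses, one per vertex of V(W) but the first, are balanced by
   gains: 2 (|V(W)| - 1) <= |W| - 1. *)

Section SwapPermutation.
Variables (T : finType) (C : Type).

Lemma swap_colorsE (g : T -> C) u v : swap_colors g u v =1 g \o tperm u v.
Proof.
move=> z; rewrite /swap_colors /=.
by case: tpermP => [->|->|/eqP/negbTE-> /eqP/negbTE->]; rewrite ?eqxx //;
  case: eqP => // ->.
Qed.

Fixpoint walk_perm (s : {perm T}) (x : T) (w : seq T) : {perm T} :=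
  if w is y :: w' then walk_perm (tperm x y * s)%g y w' else s.

Lemma swap_foldl_walk_perm (f g : T -> C) (s : {perm T}) x w :
  g =1 f \o s -> (foldl (@swap_step T C) (g, x) w).1 =1 f \o walk_perm s x w.
Proof.
elim: w g s x => [|y w IHw] g s x gE //=.
by apply: IHw => z; rewrite swap_colorsE /= gE permM.
Qed.

End SwapPermutation.

Section CycleCount.
Variable T : finType.
Implicit Types (s : {perm T}) (x y : T).

Definition ncycles s : nat := #|porbits s|.

Lemma porbit_fixed s y : s y = y -> porbit s y = [set y].
Proof.
move=> sy; apply/setP => z; rewrite inE.
apply/porbitP/eqP => [[i ->]|->]; last by exists 0; rewrite expg0 perm1.
by rewrite permX; elim: i => //= i ->.
Qed.

Lemma ncycles_mul_tperm_le s x y : ncycles (tperm x y * s) <= ncycles s + 1.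
Proof. by rewrite /ncycles; have := porbits_mul_tperm s x y; lia. Qed.

Lemma ncycles_mul_tperm_fixed s x y :
  x != y -> s y = y -> ncycles (tperm x y * s) + 1 = ncycles s.
Proof.
move=> xy sy; rewrite /ncycles; have := porbits_mul_tperm s x y.
by rewrite porbit_fixed // inE xy /=; lia.
Qed.

End CycleCount.

Section WalkPerm.
Variables (T : finType) (e : rel T).
Hypothesis e_irr : irreflexive e.

(* P is the set of vertices visited so far: s only moves vertices of P. *)
Lemma ncycles_walk_perm (s : {perm T}) (P : {set T}) x w :
  x \in P -> path e x w -> (forall v, v \notin P -> s v = v) ->
  ncycles (walk_perm s x w) + 2 * #|P :|: [set v in w]|
    <= ncycles s + 2 * #|P| + size w.
Proof.
elim: w s P x => [|y w IHw] s P x xP /=.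
  by move=> _ _; rewrite addn0 leq_add2l leq_mul2l subset_leq_card ?orbT //;
    apply/subsetP => v; rewrite !inE orbF.
case/andP=> exy walk_w s_fix.
have xy : x != y by apply: contraTneq exy => ->; rewrite e_irr.
have s'_fix v : v \notin y |: P -> (tperm x y * s)%g v = v.
  rewrite !inE negb_or => /andP[vy vP].
  have xv : x != v by apply: contraNneq vP => <-.
  by rewrite permM tpermD ?s_fix // eq_sym.
have grow : ncycles (tperm x y * s) + 2 * #|y |: P| <= ncycles s + 2 * #|P| + 1.
  rewrite cardsU1; case: (boolP (y \in P)) => [yP|yNP] /=.
    by have := ncycles_mul_tperm_le s x y; lia.
  by have := ncycles_mul_tperm_fixed xy (s_fix y yNP); lia.
have -> : P :|: [set v in y :: w] = (y |: P) :|: [set v in w].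
  by apply/setP => v; rewrite !inE orbA [(v == y) || _]orbC.
have := IHw _ _ _ (setU11 y P) walk_w s'_fix; lia.
Qed.

End WalkPerm.

Theorem lemma7 (T : finType) (e : rel T) (C : Type) (f : T -> C) (w : seq T) :
  symmetric e -> irreflexive e ->
  injective f ->
  is_walk e w ->
  (forall v, swap_seq_end f w v = f v) ->
  2 * #|[set v in w]| <= size w + 1.
Proof.
move=> _ e_irr f_inj; case: w => [|x w] walk_w f_end.
  have -> : [set v in [::]] = set0 :> {set T} by apply/setP => v; rewrite !inE.
  by rewrite cards0.
have pi1 : walk_perm 1%g x w = 1%g.
  apply/permP => v; rewrite perm1; apply: f_inj; rewrite -[RHS]f_end /=.
  by rewrite (@swap_foldl_walk_perm _ _ f f 1%g) // => z; rewrite /= perm1.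
have := ncycles_walk_perm e_irr (set11 x) walk_w (fun v _ => perm1 v).
have -> : [set x] :|: [set v in w] = [set v in x :: w].
  by apply/setP => v; rewrite !inE.
by rewrite pi1 cards1 /=; lia.
Qed.
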